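(* Let $(M_I,\triangleright)$ be a prefactor system, $\alpha$ a consistent set in it, and $b_i\in M_i$ for some $i\in I$. The following are equivalent: (1) $b_i\in\alpha^m$; (2) $\alpha\cup\{b_i\}$ is a consistent set; (3) there are cofinally many $i'\in I$ such that $a_{i'}\triangleright b_i$ for some $a_{i'}\in\alpha\cap M_{i'}$; (4) $a_{i'}\triangleright b_i$ for all $a_{i'}\in\alpha$ with $i'\ge i$; (5) the set of $i'\in I$ such that $a_{i'}\triangleright b_i$ for some $a_{i'}\in\alpha\cap M_{i'}$ contains a member of $\mathcal F(I)$.
   Context: Let $(I,\le)$ be a non-empty directed preordered set. Fix a family $\mathcal F(I)$ of subsets of $I$ such that every member of $\mathcal F(I)$ is cofinal in $I$ (for every $i$ there is $i'\ge i$ in it), $\mathcal F(I)$ is closed under supersets and finite intersections (it is a proper filter on the cofinal subsets), and $\mathcal F(I)$ contains every non-empty upward closed subset of $I$. A system $(M_I,\triangleright)$ consists of sets $M_i$ ($i\in I$, pairwise disjoint) and relations $\triangleright\subseteq M_{i'}\times M_i$ for $i\le i'$, reflexive for $i=i'$. $a_i\approx b_j$ iff there are $i'\ge i,j$ and $c\in M_{i'}$ with $c\triangleright a_i$, $c\triangleright b_j$. A prefactor system is a system with $a_{i'}\approx a_i\iff a_{i'}\triangleright a_i$ for all $i\le i'$. A consistent set is a set $\alpha\subseteq\bigcup_{i\in I}M_i$ such that $a_{i'}\triangleright a_i$ for all $a_{i'},a_i\in\alpha$ with $a_{i'}\in M_{i'}$, $a_i\in M_i$, $i'\ge i$, and such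 that $I_\alpha:=\{i\in I\mid \alpha\cap M_i\ne\emptyset\}\in\mathcal F(I)$. A dynamic element is a consistent set that is maximal under inclusion; for every consistent set $\alpha$ in a prefactor system there is exactly one dynamic element containing $\alpha$, denoted $\alpha^m$. *)

From Stdlib Require Import Classical.

Section Defs.
Context {I : Type} (le : I -> I -> Prop).

Definition directed_preorder : Prop :=
  (forall i, le i i) /\
  (forall i j k, le i j -> le j k -> le i k) /\
  (exists i : I, True) /\
  (forall i j, exists k, le i k /\ le j k).

Definition cofinal (S : I -> Prop) : Prop :=
  forall i, exists i', le i i' /\ S i'.

Definition upward_closed (S : I -> Prop) : Prop :=
  forall i j, S i -> le i j -> S j.

Definition admissible_family (F : (I -> Prop) -> Prop) : Prop :=
  (forall S, F S -> cofinal S) /\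
  (forall S T, F S -> (forall i, S i -> T i) -> F T) /\
  (forall S T, F S -> F T -> F (fun i => S i /\ T i)) /\
  (forall S, (exists i, S i) -> upward_closed S -> F S).

(* A system: the disjoint union of the M_i is a type X with an index map
   idx : X -> I (so M_i = {x | idx x = i}); the relation tr a b stands for
   a |> b and is only meaningful when le (idx b) (idx a). *)
Context {X : Type} (idx : X -> I) (tr : X -> X -> Prop).

Definition system_axiom : Prop := forall a : X, tr a a.

Definition approx (a b : X) : Prop :=
  exists c, le (idx a) (idx c) /\ le (idx b) (idx c) /\ tr c a /\ tr c b.

Definition prefactor_system : Prop :=
  system_axiom /\
  (forall a b, le (idx b) (idx a) -> (approx a b <-> tr a b)).

Context (F : (I -> Prop) -> Prop).

Definition index_set (alpha : X -> Prop) : I -> Prop :=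
  fun i => exists a, alpha a /\ idx a = i.

Definition consistent (alpha : X -> Prop) : Prop :=
  (forall a b, alpha a -> alpha b -> le (idx b) (idx a) -> tr a b) /\
  F (index_set alpha).

Definition dynamic_element (D : X -> Prop) : Prop :=
  consistent D /\
  (forall E, consistent E -> (forall x, D x -> E x) -> forall x, E x -> D x).

(* D is "alpha^m": a dynamic element containing alpha (unique in a prefactor system). *)
Definition is_dyn_hull (alpha D : X -> Prop) : Prop :=
  dynamic_element D /\ (forall x, alpha x -> D x).

End Defs.

From Stdlib Require Import RelationClasses.

(* One argument does all the work: if some [c] above [x] and [y] satisfies
   [c |> x] and [c |> y], then [x ~ y], so the prefactor axiom gives [x |> y].
   Since the indices of [alpha] are cofinal, such a [c] can be taken in
   [alpha]; hence the set of all [x] with [a |> x] for every [a] in [alpha]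
   above [x] is consistent and maximal: it is [alpha^m], so (1) is (4).
   Likewise, if the [a] in [alpha] with [a |> b] have cofinal indices, [b] can
   be added to any consistent set containing [alpha], in particular to
   [alpha^m]. *)

Section DynamicHull.

Context {I X : Type} {le : I -> I -> Prop} {idx : X -> I} {tr : X -> X -> Prop}
  {F : (I -> Prop) -> Prop}.
Context `{le_preorder : PreOrder I le}.
Context (HF : admissible_family le F) (Hpre : prefactor_system le idx tr).

Definition coherent (alpha : X -> Prop) : Prop :=
  forall a b, alpha a -> alpha b -> le (idx b) (idx a) -> tr a b.

Definition dominated (alpha : X -> Prop) (x : X) : Prop :=
  forall a, alpha a -> le (idx x) (idx a) -> tr a x.

Definition witness_indices (alpha : X -> Prop) (b : X) : I -> Prop :=
  fun j => le (idx b) j /\ exists a, alpha a /\ idx a = j /\ tr a b.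

Definition add_point (alpha : X -> Prop) (b : X) : X -> Prop :=
  fun x => alpha x \/ x = b.

Lemma tr_of_common_upper (c x y : X) :
  le (idx y) (idx x) -> le (idx x) (idx c) -> tr c x -> tr c y -> tr x y.
Proof.
  intros Hyx Hxc Hcx Hcy.
  apply (proj2 Hpre x y Hyx).
  exists c; repeat split; try assumption.
  transitivity (idx x); assumption.
Qed.

Lemma F_index_set_sub (alpha beta : X -> Prop) :
  (forall x, alpha x -> beta x) ->
  F (index_set idx alpha) -> F (index_set idx beta).
Proof.
  intros Hsub Halpha.
  destruct HF as [_ [Fsup _]].
  apply (Fsup _ _ Halpha).
  intros j [a [Ha Hj]]; exists a; auto.
Qed.

Lemma cofinal_of_F_subset (S T : I -> Prop) :
  F T -> (forall j, T j -> S j) -> cofinal le S.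
Proof.
  intros HT HTS j.
  destruct (proj1 HF T HT j) as [k [Hjk Tk]]; eauto.
Qed.

Lemma coherent_sub_dominated (alpha : X -> Prop) :
  coherent alpha -> forall x, alpha x -> dominated alpha x.
Proof. intros Hcoh x Hx a Ha Hle; exact (Hcoh a x Ha Hx Hle). Qed.

Lemma dominated_coherent (alpha : X -> Prop) :
  consistent le idx tr F alpha -> coherent (dominated alpha).
Proof.
  intros [_ HalphaF] x y Hx Hy Hyx.
  destruct (proj1 HF _ HalphaF (idx x)) as [j [Hxj [a [Ha <-]]]].
  apply (tr_of_common_upper a); auto.
  apply Hy; [assumption | transitivity (idx x); assumption].
Qed.

Lemma dominated_is_dyn_hull (alpha : X -> Prop) :
  consistent le idx tr F alpha -> is_dyn_hull le idx tr F alpha (dominated alpha).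
Proof.
  intros Halpha.
  pose proof (coherent_sub_dominated alpha (proj1 Halpha)) as Hsub.
  split; [split; [split|] |].
  - exact (dominated_coherent alpha Halpha).
  - exact (F_index_set_sub alpha _ Hsub (proj2 Halpha)).
  - intros E [HEcoh _] HdomE x Ex a Ha Hle.
    exact (HEcoh a x (HdomE a (Hsub a Ha)) Ex Hle).
  - exact Hsub.
Qed.

Lemma coherent_add_point (alpha D : X -> Prop) (b : X) :
  coherent D -> (forall x, alpha x -> D x) -> cofinal le (witness_indices alpha b) ->
  coherent (add_point D b).
Proof.
  intros HD HalphaD Hwit.
  assert (Hcommon : forall d, D d ->
            exists a, le (idx d) (idx a) /\ le (idx b) (idx a) /\ tr a d /\ tr a b).
  { intros d Hd.
    destruct (Hwit (idx d)) as [j [Hdj [Hbj [a [Ha [<- Hab]]]]]].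
    exists a; repeat split; auto. }
  intros x y [Hx | ->] [Hy | ->] Hyx.
  - auto.
  - destruct (Hcommon x Hx) as [a [Hxa [_ [Hax Hab]]]].
    exact (tr_of_common_upper a x b Hyx Hxa Hax Hab).
  - destruct (Hcommon y Hy) as [a [_ [Hba [Hay Hab]]]].
    exact (tr_of_common_upper a b y Hyx Hba Hab Hay).
  - apply (proj1 Hpre).
Qed.

Lemma consistent_add_point (alpha D : X -> Prop) (b : X) :
  consistent le idx tr F D -> (forall x, alpha x -> D x) ->
  cofinal le (witness_indices alpha b) -> consistent le idx tr F (add_point D b).
Proof.
  intros [HDcoh HDF] HalphaD Hwit; split.
  - exact (coherent_add_point alpha D b HDcoh HalphaD Hwit).
  - exact (F_index_set_sub D _ (fun x Hx => or_introl Hx) HDF).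
Qed.

Lemma dyn_hull_contains (alpha D : X -> Prop) (b : X) :
  is_dyn_hull le idx tr F alpha D -> cofinal le (witness_indices alpha b) -> D b.
Proof.
  intros [[HD HDmax] HalphaD] Hwit.
  apply (HDmax (add_point D b)).
  - exact (consistent_add_point alpha D b HD HalphaD Hwit).
  - intros x Hx; left; exact Hx.
  - right; reflexivity.
Qed.

Lemma F_witness_indices (alpha : X -> Prop) (b : X) :
  consistent le idx tr F alpha -> dominated alpha b -> F (witness_indices alpha b).
Proof.
  intros [_ HalphaF] Hdom.
  destruct HF as [_ [Fsup [Finter Fup]]].
  apply (Fsup (fun j => le (idx b) j /\ index_set idx alpha j)).
  - apply Finter; [| exact HalphaF].
    apply Fup; [exists (idx b); reflexivity |].
    intros j k Hj Hjk; transitivity j; assumption.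
  - intros j [Hbj [a [Ha <-]]].
    split; [| exists a; repeat split]; auto.
Qed.

End DynamicHull.

Arguments dominated {I X} le idx tr alpha x.

Theorem lemma2p9 (I : Type) (le : I -> I -> Prop) (F : (I -> Prop) -> Prop)
  (X : Type) (idx : X -> I) (tr : X -> X -> Prop)
  (HI : directed_preorder le) (HF : admissible_family le F)
  (Hpre : prefactor_system le idx tr)
  (alpha : X -> Prop) (Halpha : consistent le idx tr F alpha) (b : X) :
  let i := idx b in
  let S := fun i' => le i i' /\ exists a, alpha a /\ idx a = i' /\ tr a b in
  ((forall D, is_dyn_hull le idx tr F alpha D -> D b) <->
     consistent le idx tr F (fun x => alpha x \/ x = b)) /\
  (consistent le idx tr F (fun x => alpha x \/ x = b) <-> cofinal le S) /\
  (cofinal le S <-> (forall a, alpha a -> le i (idx a) -> tr a b)) /\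
  ((forall a, alpha a -> le i (idx a) -> tr a b) <->
     exists T, F T /\ forall i', T i' -> S i').
Proof.
  intros i S.
  assert (le_preorder : PreOrder le)
    by (destruct HI as [Hrefl [Htrans _]]; split; [exact Hrefl | exact Htrans]).
  set (P4 := dominated le idx tr alpha b).
  set (P5 := exists T, F T /\ forall i', T i' -> S i').
  assert (consistent_of_cofinal :
            cofinal le S -> consistent le idx tr F (add_point alpha b))
    by exact (consistent_add_point HF Hpre alpha alpha b Halpha (fun x Hx => Hx)).
  assert (dominated_of_consistent : consistent le idx tr F (add_point alpha b) -> P4)
    by (intros [Hcoh _] a Ha Hle; apply Hcoh; [left | right |]; auto).
  assert (large_of_dominated : P4 -> P5)
    by (intros Hdom; exists S; split; [exact (F_witness_indices HF alpha b Halpha Hdom) | auto]).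
  assert (cofinal_of_large : P5 -> cofinal le S)
    by (intros [T [HT HTS]]; exact (cofinal_of_F_subset HF S T HT HTS)).
  assert (in_hull_of_cofinal :
            cofinal le S -> forall D, is_dyn_hull le idx tr F alpha D -> D b)
    by (intros Hwit D HD; exact (dyn_hull_contains HF Hpre alpha D b HD Hwit)).
  assert (dominated_of_in_hull :
            (forall D, is_dyn_hull le idx tr F alpha D -> D b) -> P4)
    by (intros H1; exact (H1 _ (dominated_is_dyn_hull HF Hpre alpha Halpha))).
  unfold P4, P5, add_point, dominated in *; subst i.
  split; [| split; [| split]]; split; tauto.
Qed.
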